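(* Let $p_i<p_j$ be primes and let $m\ge p_j^2$ be an integer, and put $M'=\lceil m(1-3/p_j)\rceil$. (a) If $p_i\ge 3$, then $N_m(\{p_i,p_j\})\ge N_{M'}(\{p_i\})$, i.e. $$\#\{1\le k\le m:\ p_i\nmid k(k+2),\ p_j\nmid k(k+2)\}\ \ge\ M'-\left\lfloor \tfrac{M'}{p_i}\right\rfloor-\left\lfloor \tfrac{M'+2}{p_i}\right\rfloor .$$ (b) If $p_i=2$ (so $p_j\ge 3$), then $N_m(\{2,p_j\})\ge N_{M'}(\{2\})$, i.e. $$\#\{1\le k\le m:\ k \text{ odd},\ p_j\nmid k(k+2)\}\ \ge\ M'-\left\lfloor \tfrac{M'}{2}\right\rfloor .$$
   Context: For a finite set $Q$ of primes and an integer $x\ge 0$, $N_x(Q)=\#\{k\in\{1,\dots,x\}:\ p\nmid k(k+2)\text{ for every }p\in Q\}$. (For $p=2$ the condition $2\nmid k(k+2)$ just says $k$ is odd; for odd $p$ one has $N_x(\{p\})=x-\lfloor x/p\rfloor-\lfloor (x+2)/p\rfloor$.) $\lfloor\cdot\rfloor,\lceil\cdot\rceil$ are floor and ceiling. *)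

From mathcomp Require Import all_boot.
Set Implicit Arguments. Unset Strict Implicit. Unset Printing Implicit Defensive.

Definition Ncount (x : nat) (Q : seq nat) : nat :=
  count (fun k => all (fun p => ~~ (p %| k * (k + 2))) Q) (iota 1 x).

Definition ceil_div (a b : nat) : nat := (a + b - 1) %/ b.

From mathcomp Require Import all_boot zify.

Set Implicit Arguments.
Unset Strict Implicit.
Unset Printing Implicit Defensive.

(* Every k <= m that avoids p but not q is of the form q t or q t - 2, so
   N_m({p, q}) >= N_m({p}) - F1 - F2, where F1 (resp. F2) counts the
   t <= T := m / q (resp. t <= T' := (m + 2) / q) for which q t (resp. q t - 2)
   avoids p.  As p does not divide q, the t excluded from F1 form two distinct
   residue classes modulo p, so F1 <= T - 2 floor(T / p), and likewise for F2
   (for p = 2 the two classes coincide and only T - floor(T / 2) remains).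
   Since M' + T + T' <= m + 1 - q, comparing with the exact values
   N_x({p}) = x - floor(x / p) - floor((x + 2) / p) leaves a balance of floors
   that is nonnegative: for q >= 13 in general, and pair by pair for q < 13,
   except for p = 3, q = 5, m <= 27, which is settled by evaluation. *)

Lemma count_and_split (T : Type) (a b : pred T) (s : seq T) :
  count (fun x => a x && b x) s + count (fun x => a x && ~~ b x) s = count a s.
Proof. by elim: s => //= x s IHs; case: (a x); case: (b x) => /=; lia. Qed.

Lemma count_and_orb_le (T : Type) (a b c : pred T) (s : seq T) :
  count (fun x => a x && (b x || c x)) s <=
  count (fun x => a x && b x) s + count (fun x => a x && c x) s.
Proof. by elim: s => //= x s IHs; case: (a x); case: (b x); case: (c x) => /=; lia. Qed.

Lemma count_nor_disjoint (T : Type) (a b : pred T) (s : seq T) :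
  (forall x, ~~ (a x && b x)) ->
  count (fun x => ~~ a x && ~~ b x) s + count a s + count b s = size s.
Proof.
move=> ab; elim: s => //= x s IHs; have := ab x.
by case: (a x); case: (b x) => /=; lia.
Qed.

Lemma count_dvdn_iota_reindex d (P : pred nat) m : 0 < d ->
  count (fun k => (d %| k) && P k) (iota 1 m) =
  count (fun t => P (d * t)) (iota 1 (m %/ d)).
Proof.
move=> d_gt0; elim: m => [|m IHm]; first by rewrite div0n.
rewrite -[m.+1]addn1 iotaD count_cat IHm addn1 divnS //.
have [dvd_d_m1 | ndvd_d_m1] := boolP (d %| m.+1); last first.
  by rewrite add0n /= (negbTE ndvd_d_m1) !addn0.
rewrite [true + _]addnC iotaD count_cat /= !addn0 !add1n dvd_d_m1.
by rewrite -[in LHS](divnK dvd_d_m1) mulnC divnS // dvd_d_m1.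
Qed.

Lemma count_dvdn_iota d m : 0 < d -> count (dvdn d) (iota 1 m) = m %/ d.
Proof.
move=> d_gt0; rewrite -(eq_count (a1 := fun k => (d %| k) && predT k)) => [|k];
  last by rewrite andbT.
by rewrite count_dvdn_iota_reindex // count_predT size_iota.
Qed.

Lemma count_dvdn_addr_iota p c T : 0 < p ->
  count (fun t => p %| t + c) (iota 1 T) = (c + T) %/ p - c %/ p.
Proof.
move=> p_gt0; rewrite -!count_dvdn_iota // iotaD count_cat addKn [1 + c]addnC iotaDl count_map.
by apply: eq_count => t /=; rewrite addnC.
Qed.

Lemma dvdn_mul_addr_inv p q u a t : (q * u) %% p = 1 ->
  (p %| q * t + a) = (p %| t + a * u).
Proof.
move=> qu1.
have E1 : ((q * t + a) * u) %% p = (t + a * u) %% p.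
  by rewrite mulnDl -mulnA [t * u]mulnC mulnA -modnDml -modnMml qu1 mul1n modnDml.
have E2 : (q * (t + a * u)) %% p = (q * t + a) %% p.
  by rewrite mulnDr mulnA [q * a]mulnC -mulnA -modnDmr -modnMmr qu1 muln1 modnDmr.
apply/idP/idP => [|] /eqP dvd_p.
  by rewrite /dvdn -E1 -modnMml dvd_p mul0n mod0n.
by rewrite /dvdn -E2 -modnMmr dvd_p muln0 mod0n.
Qed.

Lemma exists_inv_mod p q : prime p -> ~~ (p %| q) -> exists u, (q * u) %% p = 1.
Proof.
move=> pp ndvd_pq.
have q_gt0 : 0 < q by case: q ndvd_pq; rewrite ?dvdn0.
have /(coprimeP _ q_gt0) [[u v] /= Buv] : coprime q p by rewrite coprime_sym prime_coprime.
exists u; have -> : q * u = v * p + 1 by lia.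
by rewrite modnMDl modn_small // prime_gt1.
Qed.

Lemma count_ndvdn_mul_le p q (P : pred nat) T : 0 < p ->
  count (fun t => ~~ (p %| q * t) && P t) (iota 1 T) + T %/ p <= T.
Proof.
move=> p_gt0; rewrite -count_dvdn_iota // -[leqRHS](size_iota 1 T) -(count_predC (dvdn p)).
rewrite addnC leq_add2l; apply: sub_count => t /andP[ndvd _] /=.
by apply: contra ndvd; apply: dvdn_mull.
Qed.

Lemma count_ndvdn_mul_addr_le p q b T : prime p -> ~~ (p %| q) -> ~~ (p %| b) ->
  count (fun t => ~~ (p %| q * t) && ~~ (p %| q * t + b)) (iota 1 T) + 2 * (T %/ p) <= T.
Proof.
move=> pp ndvd_pq ndvd_pb; have p_gt0 := prime_gt0 pp.
have [u qu1] := exists_inv_mod pp ndvd_pq.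
have ndvd_pu : ~~ (p %| u) by apply/negP => /(dvdn_mull q); rewrite /dvdn qu1.
rewrite (eq_count (a2 := fun t => ~~ (p %| t) && ~~ (p %| t + b * u))) => [|t];
  last by rewrite Euclid_dvdM // (negbTE ndvd_pq) (dvdn_mul_addr_inv _ _ qu1).
have disjoint t : ~~ ((p %| t) && (p %| t + b * u)).
  apply/negP => /andP[dvd_pt]; rewrite dvdn_addr // Euclid_dvdM //.
  by rewrite (negbTE ndvd_pb) (negbTE ndvd_pu).
have := count_nor_disjoint (iota 1 T) disjoint.
rewrite size_iota count_dvdn_iota // count_dvdn_addr_iota // divnD //; lia.
Qed.

Definition avoids p k := ~~ (p %| k) && ~~ (p %| k + 2).

Lemma Ncount1E p x : prime p -> Ncount x [:: p] = count (avoids p) (iota 1 x).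
Proof. by move=> pp; apply: eq_count => k /=; rewrite andbT Euclid_dvdM // negb_or. Qed.

Lemma Ncount2E p q x : prime p -> prime q ->
  Ncount x [:: p; q] = count (fun k => avoids p k && avoids q k) (iota 1 x).
Proof. by move=> pp pq; apply: eq_count => k /=; rewrite andbT !Euclid_dvdM // !negb_or. Qed.

Lemma Ncount_odd_prime p x : prime p -> 2 < p ->
  Ncount x [:: p] + x %/ p + (x + 2) %/ p = x.
Proof.
move=> pp p_gt2; have p_gt0 := prime_gt0 pp.
have ndvd_p2 : ~~ (p %| 2) by apply/negP => /dvdn_leq; lia.
have disjoint k : ~~ ((p %| k) && (p %| k + 2)).
  by apply/negP => /andP[dvd_pk]; rewrite dvdn_addr // (negbTE ndvd_p2).
rewrite Ncount1E // -[RHS](size_iota 1 x) -(count_nor_disjoint _ disjoint).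
by rewrite count_dvdn_iota // count_dvdn_addr_iota // (divn_small p_gt2) subn0 [x + 2]addnC.
Qed.

Lemma Ncount_two x : Ncount x [:: 2] + x %/ 2 = x.
Proof.
rewrite Ncount1E // -count_dvdn_iota // -[RHS](size_iota 1 x) -(count_predC (dvdn 2)) addnC.
by congr (_ + _); apply: eq_count => k; rewrite /avoids /= dvdn_addl // andbb.
Qed.

Lemma count_avoids_split p q m : 2 < q ->
  count (avoids p) (iota 1 m) <=
  count (fun k => avoids p k && avoids q k) (iota 1 m)
  + count (fun t => avoids p (q * t)) (iota 1 (m %/ q))
  + count (fun t => avoids p (q * t - 2)) (iota 1 ((2 + m) %/ q)).
Proof.
move=> q_gt2; have q_gt0 : 0 < q by lia.
rewrite -(count_and_split (avoids p) (avoids q)) -addnA leq_add2l.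
rewrite (eq_count (a2 := fun k => avoids p k && ((q %| k) || (q %| k + 2)))) => [|k];
  last by rewrite /avoids negb_and !negbK.
apply: leq_trans (count_and_orb_le _ _ _ _) _; apply: leq_add.
  rewrite -count_dvdn_iota_reindex //.
  by rewrite (eq_count (a2 := fun k => (q %| k) && avoids p k)) // => k; rewrite andbC.
rewrite -(count_dvdn_iota_reindex (fun k => avoids p (k - 2))) // iotaD count_cat.
have ndvd_small : count (fun k => (q %| k) && avoids p (k - 2)) (iota 1 2) = 0.
  by rewrite /= !gtnNdvd // ltnW.
rewrite ndvd_small add0n [1 + 2]addnC iotaDl count_map.
by apply/eq_leq/eq_count => k /=; rewrite addKn andbC addnC.
Qed.

Lemma avoids_sub2 p x : 2 <= p -> 2 <= x ->
  avoids p (x - 2) = ~~ (p %| x) && ~~ (p %| x + (p - 2)).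
Proof.
move=> p_ge2 x_ge2; rewrite /avoids subnK // andbC.
have -> : x + (p - 2) = p + (x - 2) by lia.
by rewrite dvdn_addr ?dvdnn.
Qed.

Lemma Ncount_pair_ge p q m : prime p -> prime q -> 2 < q ->
  Ncount m [:: p] <= Ncount m [:: p; q]
  + count (fun t => ~~ (p %| q * t) && ~~ (p %| q * t + 2)) (iota 1 (m %/ q))
  + count (fun t => ~~ (p %| q * t) && ~~ (p %| q * t + (p - 2))) (iota 1 ((2 + m) %/ q)).
Proof.
move=> pp pq q_gt2; rewrite Ncount1E // Ncount2E //.
set T' := (2 + m) %/ q.
have -> : count (fun t => ~~ (p %| q * t) && ~~ (p %| q * t + (p - 2))) (iota 1 T') =
          count (fun t => avoids p (q * t - 2)) (iota 1 T').
  apply: eq_in_count => t; rewrite mem_iota => /andP[t_ge1 _].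
  by rewrite avoids_sub2 ?(prime_gt1 pp) //; nia.
exact: count_avoids_split.
Qed.

Lemma divn_bounds p x : 0 < p -> p * (x %/ p) <= x < p * (x %/ p) + p.
Proof. by move=> p_gt0; have := divn_eq x p; have := ltn_pmod x p_gt0; lia. Qed.

Lemma ceil_div_gap q m : 2 < q -> q * q <= m ->
  ceil_div (m * q - 3 * m) q + m %/ q + (2 + m) %/ q + q <= m + 1.
Proof.
move=> q_gt2 qq_le_m; have q_gt0 : 0 < q by lia.
have /andP[bM _] := divn_bounds (m * q - 3 * m + q - 1) q_gt0.
have /andP[bT _] := divn_bounds m q_gt0.
have /andP[bT' _] := divn_bounds (2 + m) q_gt0.
have three_m : 3 * m <= m * q by rewrite mulnC leq_mul2l q_gt2 orbT.
rewrite /ceil_div; move: bM bT bT'.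
generalize ((m * q - 3 * m + q - 1) %/ q) (m %/ q) ((2 + m) %/ q) => M T T' bM bT bT'.
suff : q * (M + T + T' + q) < q * (m + 2) by rewrite ltn_pmul2l //; lia.
nia.
Qed.

Lemma floor_balance_odd p m M T T' : 2 < p -> M + T + T' + 12 <= m ->
  M + T + T' + m %/ p + (m + 2) %/ p <=
  m + M %/ p + (M + 2) %/ p + 2 * (T %/ p) + 2 * (T' %/ p).
Proof.
move=> p_gt2 gap; have p_gt0 : 0 < p by lia.
have [s m_eq] : exists s, m = s + (M + T + T') by exists (m - (M + T + T')); lia.
subst m; rewrite -(leq_pmul2l p_gt0) !mulnDr.
have : 2 * s + 12 * p <= p * s + 24 by nia.
have := divn_bounds (s + (M + T + T')) p_gt0.
have := divn_bounds (s + (M + T + T') + 2) p_gt0.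
have := divn_bounds M p_gt0; have := divn_bounds (M + 2) p_gt0.
have := divn_bounds T p_gt0; have := divn_bounds T' p_gt0.
generalize ((s + (M + T + T')) %/ p) ((s + (M + T + T') + 2) %/ p)
  (M %/ p) ((M + 2) %/ p) (T %/ p) (T' %/ p).
lia.
Qed.

Lemma floor_balance_two m M T T' : M + T + T' + 3 <= m ->
  M + T + T' + m %/ 2 <= m + M %/ 2 + T %/ 2 + T' %/ 2.
Proof. lia. Qed.

Lemma prime_lt13 q : prime q -> q < 13 -> q \in [:: 2; 3; 5; 7; 11].
Proof. by move: q; do 13! case=> //. Qed.

(* The balance fails for p = 3, q = 5 and 25 <= m <= 27, hence 28 <= m. *)
Lemma floor_balance_small p q m : prime p -> prime q -> 2 < p -> p < q -> q < 13 ->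
  q * q <= m -> 28 <= m ->
  let M := ceil_div (m * q - 3 * m) q in
  M + m %/ q + (2 + m) %/ q + m %/ p + (m + 2) %/ p <=
  m + M %/ p + (M + 2) %/ p + 2 * (m %/ q %/ p) + 2 * ((2 + m) %/ q %/ p).
Proof.
move=> pp pq p_gt2 pq_lt q_lt13.
have := prime_lt13 pq q_lt13; have := prime_lt13 pp (ltn_trans pq_lt q_lt13).
rewrite /ceil_div !inE.
by move=> /or4P[|||/orP[|]] /eqP p_eq /or4P[|||/orP[|]] /eqP q_eq; subst p q => *; lia.
Qed.

Lemma Ncount_pair_ge_odd_lt28 p q m : prime p -> prime q -> 2 < p -> p < q ->
  q * q <= m -> m < 28 ->
  Ncount (ceil_div (m * q - 3 * m) q) [:: p] <= Ncount m [:: p; q].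
Proof.
move=> pp pq p_gt2 pq_lt qq_le_m m_lt28.
have q_eq : q = 5.
  have := prime_lt13 pq (ltac:(nia)); rewrite !inE.
  by case/or4P => [|||/orP[|]] /eqP; lia.
have p_eq : p = 3.
  have := prime_lt13 pp (ltac:(lia)); rewrite !inE.
  by case/or4P => [|||/orP[|]] /eqP; lia.
subst p q; have : m \in [:: 25; 26; 27] by rewrite !inE; lia.
by rewrite !inE => /or3P[] /eqP ->; vm_compute.
Qed.

Lemma Ncount_pair_ge_odd p q m : prime p -> prime q -> 2 < p -> p < q -> q * q <= m ->
  Ncount (ceil_div (m * q - 3 * m) q) [:: p] <= Ncount m [:: p; q].
Proof.
move=> pp pq p_gt2 pq_lt qq_le_m.
have [m_lt28 | m_ge28] := ltnP m 28; first exact: Ncount_pair_ge_odd_lt28.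
have ndvd_pq : ~~ (p %| q) by rewrite dvdn_prime2 // ltn_eqF.
have ndvd_p2 : ~~ (p %| 2) by apply/negP => /dvdn_leq; lia.
have ndvd_p_sub2 : ~~ (p %| p - 2) by apply/negP => /dvdn_leq; lia.
have q_gt2 := ltn_trans p_gt2 pq_lt.
have := count_ndvdn_mul_addr_le (m %/ q) pp ndvd_pq ndvd_p2.
have := count_ndvdn_mul_addr_le ((2 + m) %/ q) pp ndvd_pq ndvd_p_sub2.
have := Ncount_pair_ge m pp pq q_gt2.
have := Ncount_odd_prime (ceil_div (m * q - 3 * m) q) pp p_gt2.
have := Ncount_odd_prime m pp p_gt2.
have gap := ceil_div_gap q_gt2 qq_le_m.
set M := ceil_div (m * q - 3 * m) q in gap *; set T := m %/ q in gap *.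
set T' := (2 + m) %/ q in gap *.
have balance : M + T + T' + m %/ p + (m + 2) %/ p <=
               m + M %/ p + (M + 2) %/ p + 2 * (T %/ p) + 2 * (T' %/ p).
  have [q_ge13 | q_lt13] := leqP 13 q; last exact: floor_balance_small.
  by apply: floor_balance_odd => //; lia.
move: balance; clearbody M T T'.
generalize (m %/ p) ((m + 2) %/ p) (M %/ p) ((M + 2) %/ p) (T %/ p) (T' %/ p).
lia.
Qed.

Lemma Ncount_pair_ge_two q m : prime q -> 2 < q -> q * q <= m ->
  Ncount (ceil_div (m * q - 3 * m) q) [:: 2] <= Ncount m [:: 2; q].
Proof.
move=> pq q_gt2 qq_le_m.
have [q_eq | q_ne3] := eqVneq q 3.
  by rewrite q_eq /ceil_div mulnC subnn.
have := count_ndvdn_mul_le q (fun t => ~~ (2 %| q * t + 2)) (m %/ q) (isT : 0 < 2).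
have := count_ndvdn_mul_le q (fun t => ~~ (2 %| q * t + (2 - 2))) ((2 + m) %/ q) (isT : 0 < 2).
have := Ncount_pair_ge m (isT : prime 2) pq q_gt2.
have := Ncount_two (ceil_div (m * q - 3 * m) q); have := Ncount_two m.
have := ceil_div_gap q_gt2 qq_le_m.
have := @floor_balance_two m (ceil_div (m * q - 3 * m) q) (m %/ q) ((2 + m) %/ q).
lia.
Qed.

Theorem lemma4p3 (pi pj m : nat) :
  prime pi -> prime pj -> pi < pj -> pj ^ 2 <= m ->
  let M' := ceil_div (m * pj - 3 * m) pj in
  (3 <= pi -> Ncount m [:: pi; pj] >= Ncount M' [:: pi]) /\
  (pi = 2 -> Ncount m [:: 2; pj] >= Ncount M' [:: 2]).
Proof.
move=> ppi ppj pij pj2_le_m M'; rewrite -mulnn in pj2_le_m.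
split=> [pi_ge3 | pi_eq2]; first exact: Ncount_pair_ge_odd.
by subst pi; apply: Ncount_pair_ge_two.
Qed.
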